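(* Let $(n_2,n_3,\dots)$ be the $\{0,1\}$-valued random sequence defined below, and for $N\ge 2$ let $\rho(n_2,\dots,n_N)$ be the joint law of $(n_2,\dots,n_N)$ and $$\hat\rho(z_2,\dots,z_N)=\sum_{n_2,\dots,n_N\in\{0,1\}} z_2^{n_2}\cdots z_N^{n_N}\rho(n_2,\dots,n_N)$$ its generating function. Write $\alpha_i=1-1/i$. Then for every $N\ge 3$, $$\hat\rho(z_2,\dots,z_N)=\hat\rho(z_2,\dots,z_{N-1})+(z_N-1)\,\hat\rho\left(z_2\alpha_2,\dots,z_{\lfloor\sqrt N\rfloor}\alpha_{\lfloor\sqrt N\rfloor},z_{\lfloor\sqrt N\rfloor+1},\dots,z_{N-1}\right),$$ and the probability $P_N=\Pr(n_N=1)$ satisfies $P_N=\hat\rho\left(\alpha_2,\dots,\alpha_{\lfloor\sqrt N\rfloor}\right)$ (the generating function of $(n_2,\dots,n_{\lfloor\sqrt N\rfloor})$ evaluated at these arguments).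
   Context: The random sequence models ''random primes'': $n_2=1$ almost surely, and for each $N\ge 3$, conditionally on $(n_2,\dots,n_{N-1})$, one has $n_N=1$ with probability $\prod_{i=2}^{\lfloor\sqrt N\rfloor}(1-1/i)^{n_i}$ and $n_N=0$ otherwise. (Interpretation: $n_k=1$ means $k$ is declared prime; $N$ is declared prime iff it fails to connect to each earlier declared prime $i\le\sqrt N$, connections occurring independently with probability $1/i$.) *)

From mathcomp Require Import all_boot all_order all_algebra.
Set Implicit Arguments. Unset Strict Implicit. Unset Printing Implicit Defensive.
Import Order.TTheory GRing.Theory Num.Theory.
Local Open Scope ring_scope.

Definition isqrt (N : nat) : nat := (\max_(m < N.+1 | (m * m <= N)%N) m)%N.

Section RandomPrimes.
Variable R : numFieldType.

Definition alpha (i : nat) : R := 1 - (i%:R)^-1.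

(* conditional probability that n_k = 1 given the earlier values n_2..n_{k-1}
   (n_2 = 1 almost surely) *)
Definition condp (n : nat -> bool) (k : nat) : R :=
  if k == 2%N then 1 else \prod_(2 <= i < (isqrt k).+1) alpha i ^+ n i.

Definition rho (N : nat) (n : nat -> bool) : R :=
  \prod_(2 <= k < N.+1) (if n k then condp n k else 1 - condp n k).

(* a configuration (n_2,...,n_N) encoded by a tuple t of length N-1: n_k = t_(k-2) *)
Definition cfg (N : nat) (t : (N.-1).-tuple bool) : nat -> bool :=
  fun k => nth false t (k - 2).

Definition rhohat (N : nat) (z : nat -> R) : R :=
  \sum_(t : (N.-1).-tuple bool)
     (\prod_(2 <= k < N.+1) z k ^+ cfg t k) * rho N (cfg t).

Definition probP (N : nat) : R :=
  \sum_(t : (N.-1).-tuple bool) (if cfg t N then rho N (cfg t) else 0).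

End RandomPrimes.

(* The law rho of (n_2,...,n_N) factorises as the law of (n_2,...,n_(N-1)) times the
   conditional law of n_N, whose success probability condp is the monomial
   prod_(i <= isqrt N) alpha_i^(n_i).  Summing over n_N in {0,1} with weight z_N^(n_N)
   gives the recursion, the factor condp being absorbed by scaling z_i to z_i alpha_i
   for i <= isqrt N.  Likewise P_N is the expectation of condp, which only depends on
   (n_2,...,n_(isqrt N)); as the conditional laws sum to one, the later coordinates
   can be summed out, leaving rhohat (isqrt N) at the alpha_i. *)
From mathcomp Require Import all_boot all_order all_algebra.
From mathcomp Require Import zify ring.
Set Implicit Arguments. Unset Strict Implicit. Unset Printing Implicit Defensive.
Import Order.TTheory GRing.Theory Num.Theory.
Local Open Scope ring_scope.

Lemma big_tuple_rcons (V : nmodType) (T : finType) n (F : n.+1.-tuple T -> V) :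
  \sum_(t : n.+1.-tuple T) F t = \sum_(t : n.-tuple T) \sum_(x : T) F (rcons_tuple t x).
Proof.
rewrite pair_big /= (reindex (fun p : n.-tuple T * T => rcons_tuple p.1 p.2)) //.
have take_sizeS : minn n n.+1 = n by apply/minn_idPl.
exists (fun t => (tcast take_sizeS (take_tuple n t), tnth t ord_max)).
  move=> [s x] _; congr pair; last by rewrite (tnth_nth x) /= nth_rcons size_tuple ltnn eqxx.
  by apply/val_inj; rewrite /= (val_tcast take_sizeS) /= -cats1 take_size_cat ?size_tuple.
move=> t _; apply/val_inj; rewrite /= (val_tcast take_sizeS) /=.
by rewrite (tnth_nth (tnth t ord_max)) /= -take_nth ?size_tuple // take_oversize ?size_tuple.
Qed.

Lemma isqrt_gt0 k : (0 < k)%N -> (0 < isqrt k)%N.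
Proof.
move=> k_gt0; rewrite /isqrt.
exact: (@leq_bigmax_cond _ (fun m : 'I_k.+1 => (m * m <= k)%N) (fun m => nat_of_ord m)
         (Ordinal (k_gt0 : (1 < k.+1)%N))).
Qed.

Lemma isqrt_ltn k : (1 < k)%N -> (isqrt k < k)%N.
Proof.
move=> k_gt1; rewrite /isqrt -[X in (_ < X)%N]prednK ?ltnS; last by lia.
apply/bigmax_leqP => i sq_le; have := ltn_ord i; nia.
Qed.

Lemma isqrt_leq k : (isqrt k <= k)%N.
Proof. by apply/bigmax_leqP => i _; rewrite -ltnS. Qed.

Lemma prod_exp_scale_prefix (R : comPzRingType) (z a : nat -> R) (e : nat -> nat) M L :
  (M < L)%N ->
  \prod_(2 <= k < L) (if (k <= M)%N then z k * a k else z k) ^+ e k =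
  \prod_(2 <= k < L) z k ^+ e k * \prod_(2 <= k < M.+1) a k ^+ e k.
Proof.
move=> lt_ML; rewrite (big_nat_widen 2 M.+1 L xpredT) // [X in _ * X]big_mkcond.
rewrite -big_split /=; apply: eq_bigr => k _; rewrite ltnS.
by case: (k <= M)%N; rewrite ?exprMn ?mulr1.
Qed.

Lemma cfg_rcons n (t : n.-tuple bool) b k :
  (2 <= k <= n.+1)%N -> @cfg n.+2 (rcons_tuple t b) k = @cfg n.+1 t k.
Proof. by move=> k_range; rewrite /cfg /= nth_rcons size_tuple ifT //; lia. Qed.

Lemma cfg_rcons_last n (t : n.-tuple bool) b :
  @cfg n.+2 (rcons_tuple t b) n.+2 = b.
Proof. by rewrite /cfg /= nth_rcons size_tuple subn2 /= ltnn eqxx. Qed.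

Section RandomPrimes.
Variable R : numFieldType.

Definition monomial (N : nat) (z : nat -> R) (n : nat -> bool) : R :=
  \prod_(2 <= k < N.+1) z k ^+ n k.

Lemma rhohatE N z :
  rhohat N z = \sum_(t : (N.-1).-tuple bool) monomial N z (cfg t) * rho R N (cfg t).
Proof. by []. Qed.

(* For k = 2 the product is empty, as isqrt 2 = 1. *)
Lemma condpE n k : condp R n k = \prod_(2 <= i < (isqrt k).+1) alpha R i ^+ n i.
Proof. by rewrite /condp; case: eqP => // ->; rewrite big_geq ?isqrt_ltn. Qed.

Lemma eq_condp n n' k :
  (forall i, (2 <= i <= isqrt k)%N -> n i = n' i) -> condp R n k = condp R n' k.
Proof. by move=> eq_n; rewrite !condpE; apply: eq_big_nat => i i_range; rewrite eq_n. Qed.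

Lemma eq_rho N n n' : (forall k, (2 <= k <= N)%N -> n k = n' k) -> rho R N n = rho R N n'.
Proof.
move=> eq_n; apply: eq_big_nat => k /andP[k_ge2 k_le]; rewrite ltnS in k_le.
rewrite eq_n ?k_ge2 // (@eq_condp n n') // => i /andP[i_ge2 i_le]; apply: eq_n.
by rewrite i_ge2 (leq_trans i_le) // (leq_trans (isqrt_leq k)).
Qed.

Lemma rho_rcons n (t : n.-tuple bool) b :
  rho R n.+2 (@cfg n.+2 (rcons_tuple t b)) =
  rho R n.+1 (@cfg n.+1 t) *
  (if b then condp R (@cfg n.+1 t) n.+2 else 1 - condp R (@cfg n.+1 t) n.+2).
Proof.
rewrite [LHS]big_nat_recr //= cfg_rcons_last.
have -> : condp R (@cfg n.+2 (rcons_tuple t b)) n.+2 = condp R (@cfg n.+1 t) n.+2.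
  apply: eq_condp => i /andP[i_ge2 i_le]; apply: cfg_rcons.
  by rewrite i_ge2 (leq_trans i_le) // -ltnS isqrt_ltn.
congr (_ * _).
by apply: (@eq_rho n.+1) => k; apply: cfg_rcons.
Qed.

Lemma sum_rho_rcons n (t : n.-tuple bool) :
  \sum_(b : bool) rho R n.+2 (@cfg n.+2 (rcons_tuple t b)) = rho R n.+1 (@cfg n.+1 t).
Proof. by rewrite big_bool /= !rho_rcons; ring. Qed.

Lemma sum_rho_marginal M L (G : (nat -> bool) -> R) :
  (forall n n', (forall k, (2 <= k <= M)%N -> n k = n' k) -> G n = G n') ->
  (0 < M <= L)%N ->
  \sum_(t : (L.-1).-tuple bool) G (cfg t) * rho R L (cfg t) =
  \sum_(t : (M.-1).-tuple bool) G (cfg t) * rho R M (cfg t).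
Proof.
move=> eq_G; elim: L => [|L IHL]; first by case: M {eq_G}.
case/andP=> M_gt0; rewrite leq_eqVlt ltnS => /predU1P[-> // | le_ML].
case: L IHL le_ML => [|l] IHL le_ML; first by case: M M_gt0 le_ML {eq_G IHL}.
rewrite -IHL ?M_gt0 // big_tuple_rcons; apply: eq_bigr => t _.
have G_rcons b : G (@cfg l.+2 (rcons_tuple t b)) = G (@cfg l.+1 t).
  apply: eq_G => k /andP[k_ge2 le_kM]; apply: cfg_rcons.
  by rewrite k_ge2 (leq_trans le_kM).
by rewrite -sum_rho_rcons mulr_sumr; apply: eq_bigr => b _; rewrite G_rcons.
Qed.

Lemma monomial_rcons n z (t : n.-tuple bool) b :
  monomial n.+2 z (@cfg n.+2 (rcons_tuple t b)) =
  monomial n.+1 z (@cfg n.+1 t) * z n.+2 ^+ b.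
Proof.
rewrite /monomial big_nat_recr //= cfg_rcons_last; congr (_ * _).
by apply: eq_big_nat => k /cfg_rcons ->.
Qed.

Lemma monomial_scale_alpha n z (t : n.-tuple bool) :
  monomial n.+1 (fun i => if (i <= isqrt n.+2)%N then z i * alpha R i else z i)
    (@cfg n.+1 t) =
  monomial n.+1 z (@cfg n.+1 t) * condp R (@cfg n.+1 t) n.+2.
Proof. by rewrite /monomial condpE prod_exp_scale_prefix // isqrt_ltn. Qed.

Lemma rhohat_recursion n z :
  rhohat n.+2 z =
    rhohat n.+1 z +
    (z n.+2 - 1) * rhohat n.+1 (fun i => if (i <= isqrt n.+2)%N then z i * alpha R i else z i).
Proof.
rewrite !rhohatE big_tuple_rcons mulr_sumr -big_split; apply: eq_bigr => t _ /=.
by rewrite big_bool /= !monomial_rcons !rho_rcons monomial_scale_alpha; ring.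
Qed.

Lemma probP_rhohat n : probP R n.+2 = rhohat (isqrt n.+2) (alpha R).
Proof.
set M := isqrt n.+2.
have -> : probP R n.+2 =
    \sum_(t : n.-tuple bool) monomial M (alpha R) (@cfg n.+1 t) * rho R n.+1 (@cfg n.+1 t).
  rewrite /probP big_tuple_rcons; apply: eq_bigr => t _.
  rewrite big_bool (cfg_rcons_last t true) (cfg_rcons_last t false) /=.
  by rewrite addr0 rho_rcons condpE mulrC.
rewrite rhohatE (@sum_rho_marginal M n.+1) // => [n1 n2 eq_n|].
  by apply: eq_big_nat => i /eq_n ->.
by rewrite isqrt_gt0 // -ltnS isqrt_ltn.
Qed.

End RandomPrimes.

Theorem mainTheorem12 (R : numFieldType) (N : nat) (HN : (3 <= N)%N) :
  (forall z : nat -> R,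
     rhohat N z =
       rhohat N.-1 z +
       (z N - 1) * rhohat N.-1 (fun i => if (i <= isqrt N)%N then z i * alpha R i else z i))
  /\ probP R N = rhohat (isqrt N) (alpha R).
Proof.
case: N HN => [|[|n]] // _.
by split; [exact: rhohat_recursion | exact: probP_rhohat].
Qed.
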